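(* Let $G$ and $H$ be finitely generated groups, let $f:G\to H$ be a surjective homomorphism, and let $S=(g_1,\dots,g_n)\in\Gamma_n(G)$. Then: (1) if $\Gamma_n(H,f(S))$ has exponential growth, where $f(S)=(f(g_1),\dots,f(g_n))$, then $\Gamma_n(G,S)$ has exponential growth; (2) if some connected component of $\Gamma_m(H)$ has exponential growth, then $\Gamma_{n+m}(G,S)$ has exponential growth; (3) if $H$ has exponential Nielsen growth, then $G$ has exponential Nielsen growth.
   Context: For a group $G$, a generating $n$-tuple is $(g_1,\dots,g_n)\in G^n$ with $G=\langle g_1,\dots,g_n\rangle$. The product replacement graph $\Gamma_n(G)$ has vertices the generating $n$-tuples, with edges from $(g_1,\dots,g_n)$ to each tuple obtained by replacing $g_j$ by $g_jg_i^{\pm1}$ or $g_i^{\pm1}g_j$, for every ordered pair $i\neq j$. For $S=(g_1,\dots,g_n)\in\Gamma_n(G)$ and $m\ge0$, $S^{(m)}=(g_1,\dots,g_n,1,\dots,1)\in\Gamma_{n+m}(G)$ and $\Gamma_{n+m}(G,S)$ is the connected component of $\Gamma_{n+m}(G)$ containing $S^{(m)}$ (so $\Gamma_n(G,S)$ is the component containing $S$). For a graph $\Gamma$ and vertex $v$, $B_\Gamma(v,r)$ is the set of vertices at path distance at most $r$ from $v$; a graph has exponential growth from $v$ if $|B_\Gamma(v,r)|\ge\alpha^r$ for some $\alpha>1$ and all sufficiently large $r$; a connected graph has exponential growth if it has exponential growth from some (equivalently every) vertex. $G$ has exponential Nielsen growth if $\Gamma_n(G,S)$ has exponential growth for some $n$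 and some generating $n$-tuple $S$. *)

From Stdlib Require Import Reals.
From mathcomp Require Import all_boot.

Set Implicit Arguments.
Unset Strict Implicit.
Unset Printing Implicit Defensive.

Record group := Group {
  carrier :> Type;
  gmul : carrier -> carrier -> carrier;
  ginv : carrier -> carrier;
  gone : carrier;
  gmulA : forall x y z, gmul x (gmul y z) = gmul (gmul x y) z;
  gmul1 : forall x, gmul gone x = x;
  gmulV : forall x, gmul (ginv x) x = gone
}.

Arguments gone {g}.

Inductive in_gen (G : group) (A : G -> Prop) : G -> Prop :=
| gen_base x : A x -> in_gen A x
| gen_one : in_gen A gone
| gen_mul x y : in_gen A x -> in_gen A y -> in_gen A (gmul x y)
| gen_inv x : in_gen A x -> in_gen A (ginv x).

Definition finitely_generated (G : group) : Prop :=
  exists s : seq G, forall x : G, in_gen (fun y => List.In y s) x.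

Definition is_hom (G H : group) (f : G -> H) : Prop :=
  forall x y, f (gmul x y) = gmul (f x) (f y).

Definition surj (G H : group) (f : G -> H) : Prop :=
  forall y, exists x, f x = y.

Definition tup (G : group) (n : nat) := 'I_n -> G.

Definition generating (G : group) n (S : tup G n) : Prop :=
  forall x : G, in_gen (fun y => exists i, S i = y) x.

Definition upd (G : group) n (S : tup G n) (j : 'I_n) (x : G) : tup G n :=
  fun k => if k == j then x else S k.

Definition gpow (G : group) (x : G) (e : bool) : G := if e then x else ginv x.

Definition nmove (G : group) n (S T : tup G n) : Prop :=
  exists i j : 'I_n, i != j /\ exists e side : bool,
    T = upd S j (if side then gmul (S j) (gpow (S i) e)
                          else gmul (gpow (S i) e) (S j)).

Definition pr_edge (G : group) n (S T : tup G n) : Prop :=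
  generating S /\ generating T /\ nmove S T.

Inductive dist_le (G : group) n : nat -> tup G n -> tup G n -> Prop :=
| dist_refl r S : generating S -> dist_le r S S
| dist_step r S T U : dist_le r S T -> pr_edge T U -> dist_le r.+1 S U.

Definition ball (G : group) n (v : tup G n) (r : nat) : tup G n -> Prop :=
  fun w => dist_le r v w.

Definition card_ge (T : Type) (A : T -> Prop) (k : nat) : Prop :=
  exists f : 'I_k -> T, injective f /\ forall i, A (f i).

Definition card_geR (T : Type) (A : T -> Prop) (x : R) : Prop :=
  exists k : nat, card_ge A k /\ Rle x (INR k).

Definition exp_growth_from (G : group) n (v : tup G n) : Prop :=
  exists alpha : R, Rlt 1 alpha /\
    exists r0 : nat, forall r : nat, (r0 <= r)%N ->
      card_geR (ball v r) (pow alpha r).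

Definition component (G : group) n (S : tup G n) : tup G n -> Prop :=
  fun w => exists r, dist_le r S w.

Definition comp_exp_growth (G : group) n (S : tup G n) : Prop :=
  exists v, component S v /\ exp_growth_from v.

Definition pad (G : group) n (m : nat) (S : tup G n) : tup G (n + m) :=
  fun k => match fintype.split k with inl i => S i | inr _ => gone end.

Definition exp_nielsen_growth (G : group) : Prop :=
  exists n (S : tup G n), generating S /\ comp_exp_growth S.
Arguments pad {G n} m S.

From Pilot Require Import Defs.
From Stdlib Require Import Reals.
From mathcomp Require Import all_boot.
From Stdlib Require Import FunctionalExtensionality ClassicalEpsilon.

Set Implicit Arguments.
Unset Strict Implicit.
Unset Printing Implicit Defensive.

(* If [w] is a generating tuple of [G], every Nielsen move of [f w]
   is the image of the same Nielsen move of [w], which keeps [w] generating;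
   hence paths of [Gamma_n(H)] from [f w] lift to paths of [Gamma_n(G)] from
   [w], balls around [w] surject onto balls around [f w], and exponential
   growth pulls back.  For [S^(m)], the tuples [(S, x)] with [S] generating all
   lie in the component of [S^(m)] (multiply each [x_j] by generators taken from
   the [S]-block), and moves inside the [x]-block lift moves of [Gamma_m(H)]
   in the same way. *)

Section GroupFacts.
Variable G : group.
Implicit Types x y z : G.

Lemma gmulI x y z : gmul x y = gmul x z -> y = z.
Proof. by move=> e; rewrite -(gmul1 y) -(gmul1 z) -(gmulV x) -!gmulA e. Qed.

Lemma gmulVr x : gmul x (ginv x) = gone.
Proof.
rewrite -(gmul1 (gmul x (ginv x))) -(gmulV (ginv x)).
by rewrite -gmulA (gmulA (ginv x) x) gmulV gmul1 gmulV.
Qed.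

Lemma gmul1r x : gmul x gone = x.
Proof. by rewrite -(gmulV x) gmulA gmulVr gmul1. Qed.

Lemma ginv_unique x y : gmul x y = gone -> x = ginv y.
Proof. by move=> e; rewrite -(gmul1r x) -(gmulVr y) gmulA e gmul1. Qed.

Lemma ginv1 : ginv (gone : G) = gone.
Proof. by rewrite -(gmul1r (ginv gone)) gmulV. Qed.

Lemma ginvK x : ginv (ginv x) = x.
Proof. by symmetry; apply: ginv_unique; apply: gmulVr. Qed.

Lemma ginvM x y : ginv (gmul x y) = gmul (ginv y) (ginv x).
Proof.
symmetry; apply: ginv_unique.
by rewrite -gmulA (gmulA (ginv x)) gmulV gmul1 gmulV.
Qed.

End GroupFacts.

Section Homomorphism.
Variables (G H : group) (f : G -> H).
Hypothesis hom_f : is_hom f.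

Lemma hom1 : f gone = gone.
Proof. by apply: (@gmulI _ (f gone)); rewrite -hom_f gmul1 gmul1r. Qed.

Lemma homV x : f (ginv x) = ginv (f x).
Proof. by apply: ginv_unique; rewrite -hom_f gmulV hom1. Qed.

Lemma hom_gpow x e : f (gpow x e) = gpow (f x) e.
Proof. by case: e => //=; apply: homV. Qed.

End Homomorphism.

Lemma in_gen_sub (G : group) (A B : G -> Prop) x :
  (forall y, A y -> in_gen B y) -> in_gen A x -> in_gen B x.
Proof.
move=> sub_AB; elim=> {x} [x /sub_AB //| |x y _ hx _ hy|x _ hx].
- exact: gen_one.
- exact: gen_mul.
- exact: gen_inv.
Qed.

Lemma generating_sub (G : group) n k (S : tup G n) (T : tup G k) :
  generating S -> (forall i, exists j, T j = S i) -> generating T.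
Proof.
move=> genS sub_ST x; apply: (in_gen_sub _ (genS x)) => _ [i <-].
by apply: gen_base; apply: sub_ST.
Qed.

Section ReplacementGraph.
Variables (G : group) (n : nat).
Implicit Types S T : tup G n.

Lemma upd_eq S j x : upd S j x j = x.
Proof. by rewrite /upd eqxx. Qed.

Lemma upd_upd S j x y : upd (upd S j x) j y = upd S j y.
Proof. by apply: functional_extensionality => k; rewrite /upd; case: (k == j). Qed.

Lemma upd_id S j : upd S j (S j) = S.
Proof. by apply: functional_extensionality => k; rewrite /upd; case: eqP => [->|]. Qed.

Definition nielsen S (i j : 'I_n) (e side : bool) : tup G n :=
  upd S j (if side then gmul (S j) (gpow (S i) e) else gmul (gpow (S i) e) (S j)).

Lemma generating_nielsen S i j e side :
  generating S -> i != j -> generating (nielsen S i j e side).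
Proof.
move=> genS neq_ij x; apply: (in_gen_sub _ (genS x)) => _ [k <-].
set T := nielsen S i j e side.
have genT y : (exists l, T l = y) -> in_gen (fun y => exists l, T l = y) y.
  exact: gen_base.
have Ti : T i = S i by rewrite /T /nielsen /upd (negbTE neq_ij).
have Tj : T j = (if side then gmul (S j) (gpow (S i) e)
                 else gmul (gpow (S i) e) (S j)) by rewrite /T /nielsen /upd eqxx.
have gen_inv_pow : in_gen (fun y => exists l, T l = y) (ginv (gpow (S i) e)).
  apply: gen_inv; have genSi := genT _ (ex_intro _ i Ti).
  by case: (e) => //=; apply: gen_inv.
case: (eqVneq k j) => [->|neq_kj]; last first.
  by apply: genT; exists k; rewrite /T /nielsen /upd (negbTE neq_kj).
clearbody T; move: Tj; case: side => Tj.
- have -> : S j = gmul (T j) (ginv (gpow (S i) e)) by rewrite Tj -gmulA gmulVr gmul1r.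
  by apply: gen_mul => //; apply: genT; exists j.
- have -> : S j = gmul (ginv (gpow (S i) e)) (T j) by rewrite Tj gmulA gmulV gmul1.
  by apply: gen_mul => //; apply: genT; exists j.
Qed.

Lemma pr_edge_nielsen S i j e side :
  generating S -> i != j -> pr_edge S (nielsen S i j e side).
Proof.
move=> genS neq_ij; split=> //; split; first exact: generating_nielsen.
by exists i, j; split=> //; exists e, side.
Qed.

Lemma dist_le_generating r S T : dist_le r S T -> generating S /\ generating T.
Proof. by elim=> // {}r {}S T' U _ [genS _] [_ [genU _]]. Qed.

Lemma component_step S T U : component S T -> pr_edge T U -> component S U.
Proof. by move=> [r dST] TU; exists r.+1; apply: dist_step TU. Qed.

End ReplacementGraph.

Lemma map_nielsen (G H : group) (f : G -> H) n (S : tup G n) i j e side :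
  is_hom f ->
  (fun k => f (nielsen S i j e side k)) = nielsen (fun k => f (S k)) i j e side.
Proof.
move=> hom_f; apply: functional_extensionality => k; rewrite /nielsen /upd.
by case: (k == j) => //; case: side; rewrite hom_f (hom_gpow hom_f).
Qed.

Lemma card_ge_preimage (A B : Type) (P : A -> Prop) (Q : B -> Prop) (p : A -> B) k :
  (forall y, Q y -> exists2 x, P x & p x = y) -> card_ge Q k -> card_ge P k.
Proof.
move=> onto [g [inj_g Qg]].
have [h hP] : exists h : 'I_k -> A, forall i, P (h i) /\ p (h i) = g i.
  apply: (choice (fun i x => P x /\ p x = g i)) => i.
  by have [x ? ?] := onto _ (Qg i); exists x.
exists h; split=> [i j hij|i]; last exact: (hP i).1.
by apply: inj_g; rewrite -(hP i).2 -(hP j).2 hij.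
Qed.

Section PathLifting.
Variables (G H : group) (n m : nat) (p : tup G n -> tup H m) (P : tup G n -> Prop).
Hypothesis edge_lift : forall w U, P w -> pr_edge (p w) U ->
  exists w', [/\ P w', pr_edge w w' & p w' = U].

Lemma dist_le_lift v r U : generating v -> P v -> dist_le r (p v) U ->
  exists w, [/\ P w, dist_le r v w & p w = U].
Proof.
move=> genv Pv; move eq_pv: (p v) => pv dpU.
elim: dpU eq_pv => [r0 S0 _ <-|r0 S0 T U' _ IH edge_TU eq_pv].
  by exists v; split=> //; apply: Defs.dist_refl.
have [w [Pw dvw eq_T]] := IH eq_pv; subst T.
have [w' [Pw' edge_ww' <-]] := edge_lift Pw edge_TU.
by exists w'; split=> //; apply: dist_step edge_ww'.
Qed.

Lemma exp_growth_lift v : generating v -> P v ->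
  exp_growth_from (p v) -> exp_growth_from v.
Proof.
move=> genv Pv [a [a_gt1 [r0 growth]]]; exists a; split=> //; exists r0 => r le_r0r.
have [k [card_k le_ak]] := growth r le_r0r; exists k; split=> //.
apply: (card_ge_preimage (p := p)) card_k => U /(dist_le_lift genv Pv) [w [_ dvw pw]].
by exists w.
Qed.

Lemma comp_exp_growth_lift (S v : tup G n) :
  component S v -> P v -> exp_growth_from (p v) -> comp_exp_growth S.
Proof.
move=> [r dSv] Pv growth; exists v; split; first by exists r.
exact: exp_growth_lift (dist_le_generating dSv).2 Pv growth.
Qed.

End PathLifting.

Section SurjectiveImage.
Variables (G H : group) (f : G -> H).
Hypothesis hom_f : is_hom f.

Lemma comp_exp_growth_map n (S : tup G n) :
  generating S -> comp_exp_growth (fun k => f (S k)) -> comp_exp_growth S.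
Proof.
move=> genS [v' [[r dv'] growth]].
pose p (w : tup G n) k := f (w k).
have edge_lift w U : generating w -> pr_edge (p w) U ->
    exists w', [/\ generating w', pr_edge w w' & p w' = U].
  move=> genw [_ [_ [i [j [neq_ij [e [side ->]]]]]]].
  exists (nielsen w i j e side); split; first exact: generating_nielsen.
    exact: pr_edge_nielsen.
  exact: map_nielsen.
have [v [genv dSv eq_v]] := dist_le_lift edge_lift genS genS dv'; subst v'.
by apply: (comp_exp_growth_lift edge_lift (v := v)) genv growth; exists r.
Qed.

Section Padding.
Variables (n m : nat) (S : tup G n).
Hypothesis genS : generating S.

(* The tuple [(S, x)]; [pad m S] is convertible to [catS (fun _ => gone)]. *)
Definition catS (x : tup G m) : tup G (n + m) :=
  fun k => match fintype.split k with inl i => S i | inr j => x j end.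

Lemma catS_lshift x i : catS x (lshift m i) = S i.
Proof. by rewrite /catS (unsplitK (inl i)). Qed.

Lemma catS_rshift x j : catS x (rshift n j) = x j.
Proof. by rewrite /catS (unsplitK (inr j)). Qed.

Lemma generating_catS x : generating (catS x).
Proof. by apply: (generating_sub genS) => i; exists (lshift m i); apply: catS_lshift. Qed.

Lemma upd_catS x j y : upd (catS x) (rshift n j) y = catS (upd x j y).
Proof.
apply: functional_extensionality => k; rewrite /upd.
case: (split_ordP k) => l ->.
- by rewrite eq_lrshift !catS_lshift.
- by rewrite eq_rshift !catS_rshift.
Qed.

Lemma nielsen_catS x i j e side :
  nielsen (catS x) (rshift n i) (rshift n j) e side = catS (nielsen x i j e side).
Proof. by rewrite /nielsen !catS_rshift upd_catS. Qed.

Lemma component_catS_mul g : in_gen (fun y => exists i, S i = y) g ->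
  forall x j, component (pad m S) (catS x) ->
    component (pad m S) (catS (upd x j (gmul (x j) g))) /\
    component (pad m S) (catS (upd x j (gmul (x j) (ginv g)))).
Proof.
have move_by_generator x j i e : component (pad m S) (catS x) ->
    component (pad m S) (catS (upd x j (gmul (x j) (gpow (S i) e)))).
  move=> cx; apply: component_step cx _.
  have := pr_edge_nielsen (i := lshift m i) (j := rshift n j) e true (generating_catS x).
  by rewrite eq_lrshift /nielsen catS_lshift catS_rshift upd_catS; apply.
elim=> {g} [_ [i <-]| |a b _ IHa _ IHb|a _ IHa] x j cx.
- by split; [apply: (move_by_generator _ _ _ true) | apply: (move_by_generator _ _ _ false)].
- by rewrite ginv1 gmul1r upd_id.
- split.
  + have [cxa _] := IHa x j cx; have [cxab _] := IHb _ j cxa.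
    by rewrite upd_upd upd_eq -gmulA in cxab.
  + have [_ cxb] := IHb x j cx; have [_ cxba] := IHa _ j cxb.
    by rewrite upd_upd upd_eq -gmulA -ginvM in cxba.
- by have [? ?] := IHa x j cx; rewrite ginvK.
Qed.

Definition trunc (x : tup G m) (k : nat) : tup G m :=
  fun j => if (j < k)%N then x j else gone.

Lemma trunc_ge x k : (m <= k)%N -> trunc x k = x.
Proof.
move=> le_mk; apply: functional_extensionality => j.
by rewrite /trunc (leq_trans (ltn_ord j) le_mk).
Qed.

Lemma catS_trunc0 x : catS (trunc x 0) = pad m S.
Proof. by []. Qed.

Lemma truncS x k (lt_km : (k < m)%N) (jk := Ordinal lt_km) :
  trunc x k.+1 = upd (trunc x k) jk (gmul (trunc x k jk) (x jk)).
Proof.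
apply: functional_extensionality => j; rewrite /upd /trunc ltnS leq_eqVlt.
case: (eqVneq j jk) => [->|neq_jk]; first by rewrite /= !eqxx ltnn gmul1.
suff -> : (nat_of_ord j == k) = false by [].
exact: negbTE neq_jk.
Qed.

Lemma component_catS x : component (pad m S) (catS x).
Proof.
suff reach_trunc k : component (pad m S) (catS (trunc x k)).
  by rewrite -(trunc_ge x (leqnn m)).
elim: k => [|k IH].
  by rewrite catS_trunc0; exists 0; apply: Defs.dist_refl; apply: generating_catS.
case: (ltnP k m) => [lt_km|le_mk]; last by rewrite !trunc_ge // in IH *; apply: leqW.
by rewrite (truncS x lt_km); apply: (component_catS_mul (genS _) _ IH).1.
Qed.

Lemma comp_exp_growth_pad (T : tup H m) :
  surj f -> comp_exp_growth T -> comp_exp_growth (pad m S).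
Proof.
move=> surj_f [v [_ growth]].
have [g fg] := choice (fun y x => f x = y) surj_f.
pose p (w : tup G (n + m)) k := f (w (rshift n k)).
have p_catS x : p (catS x) = (fun k => f (x k)).
  by apply: functional_extensionality => k; rewrite /p catS_rshift.
have edge_lift w U : (exists x, w = catS x) -> pr_edge (p w) U ->
    exists w', [/\ exists x, w' = catS x, pr_edge w w' & p w' = U].
  move=> [x ->]; rewrite p_catS => -[_ [_ [i [j [neq_ij [e [side ->]]]]]]].
  exists (catS (nielsen x i j e side)); split; first by exists (nielsen x i j e side).
    rewrite -nielsen_catS; apply: pr_edge_nielsen; first exact: generating_catS.
    by rewrite eq_rshift.
  by rewrite p_catS map_nielsen.
apply: (comp_exp_growth_lift edge_lift (component_catS (fun k => g (v k)))).
  by exists (fun k => g (v k)).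
suff -> : p (catS (fun k => g (v k))) = v by [].
by rewrite p_catS; apply: functional_extensionality => k; rewrite fg.
Qed.

End Padding.
End SurjectiveImage.

Lemma generating_tuple_of_fg (G : group) :
  finitely_generated G -> exists n (S : tup G n), generating S.
Proof.
move=> [s gen_s]; exists (size s), (fun i => nth gone s i) => x.
apply: (in_gen_sub _ (gen_s x)) => y in_y; apply: gen_base.
elim: s in_y {gen_s} => //= a s IH [<-|/IH [i <-]]; first by exists ord0.
by exists (lift ord0 i).
Qed.

Theorem proposition3p5 (G H : group) (f : G -> H) :
  finitely_generated G -> finitely_generated H ->
  is_hom f -> surj f ->
  (forall (n : nat) (S : tup G n), generating S ->
     (comp_exp_growth (fun i => f (S i)) -> comp_exp_growth S) /\
     (forall (m : nat),
        (exists T : tup H m, generating T /\ comp_exp_growth T) ->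
        comp_exp_growth (pad m S)))
  /\ (exp_nielsen_growth H -> exp_nielsen_growth G).
Proof.
move=> fgG _ hom_f surj_f.
have part2 n (S : tup G n) m : generating S ->
    (exists T : tup H m, generating T /\ comp_exp_growth T) -> comp_exp_growth (pad m S).
  by move=> genS [T [_ growthT]]; apply: comp_exp_growth_pad growthT.
split=> [n S genS|[m [T [genT growthT]]]].
  by split=> [|m]; [apply: comp_exp_growth_map | apply: part2].
have [n [S genS]] := generating_tuple_of_fg fgG.
exists (n + m), (pad m S); split; first exact: generating_catS.
by apply: part2 => //; exists T.
Qed.
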